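(* Let $\mathbb{Y},\mathbb{T}$ be sets, let $\underline{\mathsf{P}}_{Y,\Theta}$ be a coherent lower prevision on the bounded gambles on $\mathbb{Y}\times\mathbb{T}$ with conjugate upper prevision $\overline{\mathsf{P}}_{Y,\Theta}$, and let $y\mapsto(\underline{\Pi}_y,\overline{\Pi}_y)$ be an inferential model. Suppose the IM is invulnerable, i.e., for every $H\subseteq\mathbb{T}$ and $\beta\in[0,1]$, the gamble $f^{H,\beta}(y,\theta)=\{1(\theta\in H)-\beta\}\,1\{\underline{\Pi}_y(H)>\beta\}$ satisfies $\underline{\mathsf{P}}_{Y,\Theta}(f^{H,\beta})\ge0$. Then the IM is valid, i.e., $$\overline{\mathsf{P}}_{Y,\Theta}\bigl(\{(y,\theta):\underline{\Pi}_y(H)>1-\alpha,\ \theta\notin H\}\bigr)\le\alpha\quad\text{for all }H\subseteq\mathbb{T},\ \alpha\in[0,1].$$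
   Context: A lower prevision $\underline{\mathsf{P}}$ on the linear space of bounded gambles on a set $\Omega$ is coherent if for all integers $m,K\ge0$ and all bounded gambles $f_0,\dots,f_K$, $\sup_{\omega}\bigl[\sum_{k=1}^K\{f_k(\omega)-\underline{\mathsf{P}}(f_k)\}-m\{f_0(\omega)-\underline{\mathsf{P}}(f_0)\}\bigr]\ge0$; its conjugate upper prevision is $\overline{\mathsf{P}}(f)=-\underline{\mathsf{P}}(-f)$, and for a set $B$, $\overline{\mathsf{P}}(B)=\overline{\mathsf{P}}(1_B)$. An inferential model (IM) is a map $y\mapsto(\underline{\Pi}_y,\overline{\Pi}_y)$ assigning to each $y\in\mathbb{Y}$ a coherent lower prevision $\underline{\Pi}_y$ (with conjugate upper prevision $\overline{\Pi}_y$) on bounded gambles on $\mathbb{T}$; $\underline{\Pi}_y(H)=\underline{\Pi}_y(1_H)$ for $H\subseteq\mathbb{T}$. *)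

From Stdlib Require Import Reals Lra ClassicalEpsilon.
Open Scope R_scope.

Definition bounded {Omega : Type} (f : Omega -> R) : Prop :=
  exists M : R, forall w, Rabs (f w) <= M.

(* A lower prevision on bounded gambles is represented as a total map on
   gambles; only its values on bounded gambles are constrained/used. *)
Definition prevision (Omega : Type) := (Omega -> R) -> R.

Fixpoint sum1 (K : nat) (g : nat -> R) : R :=
  match K with
  | O => 0
  | S K' => sum1 K' g + g (S K')
  end.

(* Coherence (Walley):  for all m,K >= 0 and bounded f_0..f_K,
   sup_w [ sum_{k=1}^K (f_k w - P f_k) - m (f_0 w - P f_0) ] >= 0.
   "sup >= 0" is written out as: for every eps > 0 some w attains > -eps
   (for an empty Omega the supremum is -oo, and both readings fail). *)
Definition coherent {Omega : Type} (P : prevision Omega) : Prop :=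
  forall (m K : nat) (f : nat -> (Omega -> R)),
    (forall k, (k <= K)%nat -> bounded (f k)) ->
    forall eps : R, 0 < eps ->
      exists w : Omega,
        sum1 K (fun k => f k w - P (f k)) - INR m * (f O w - P (f O)) > - eps.

Definition upper {Omega : Type} (P : prevision Omega) : prevision Omega :=
  fun f => - P (fun w => - f w).

Definition ind {Omega : Type} (B : Omega -> Prop) : Omega -> R :=
  fun w => if excluded_middle_informative (B w) then 1 else 0.

Definition IM (Y T : Type) (Pi : Y -> prevision T) : Prop :=
  forall y, coherent (Pi y).

Definition fHb {Y T : Type} (Pi : Y -> prevision T) (H : T -> Prop) (beta : R)
  : Y * T -> R :=
  fun p => (ind H (snd p) - beta) * ind (fun y => Pi y (ind H) > beta) (fst p).

Definition invulnerable {Y T : Type} (PYT : prevision (Y * T))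
  (Pi : Y -> prevision T) : Prop :=
  forall (H : T -> Prop) (beta : R), 0 <= beta <= 1 -> PYT (fHb Pi H beta) >= 0.

Definition valid {Y T : Type} (PYT : prevision (Y * T))
  (Pi : Y -> prevision T) : Prop :=
  forall (H : T -> Prop) (alpha : R), 0 <= alpha <= 1 ->
    upper PYT (ind (fun p : Y * T => Pi (fst p) (ind H) > 1 - alpha /\ ~ H (snd p)))
      <= alpha.

(* On the event E = {Pi_y(H) > 1 - alpha, theta notin H} the gamble f^{H,1-alpha}
   equals alpha - 1, and off E it is at most alpha; hence f^{H,1-alpha} - alpha
   is dominated by -1_E.  A coherent lower prevision is monotone and shifts with
   constants, so P(-1_E) >= P(f^{H,1-alpha}) - alpha >= -alpha by invulnerability,
   i.e. the upper prevision of E is at most alpha. *)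
From Stdlib Require Import Reals Lra ClassicalEpsilon.
Open Scope R_scope.

Lemma coherent_le_shift {Omega : Type} (P : prevision Omega) (f g : Omega -> R) (c : R) :
  coherent P -> bounded f -> bounded g -> (forall w, f w - c <= g w) ->
  P f - c <= P g.
Proof.
  intros HP Bf Bg Hfg.
  apply Rnot_lt_le; intro Hlt.
  destruct (HP 1%nat 1%nat (fun k => match k with O => g | _ => f end)
              ltac:(intros [|k] _; assumption) (P f - c - P g) ltac:(lra))
    as [w Hw].
  simpl in Hw; specialize (Hfg w); lra.
Qed.

Lemma ind_bounds {Omega : Type} (B : Omega -> Prop) (w : Omega) : 0 <= ind B w <= 1.
Proof. unfold ind; destruct excluded_middle_informative; lra. Qed.

Lemma bounded_opp_ind {Omega : Type} (B : Omega -> Prop) : bounded (fun w => - ind B w).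
Proof.
  exists 1; intro w; pose proof (ind_bounds B w); apply Rabs_le; lra.
Qed.

Lemma bounded_fHb {Y T : Type} (Pi : Y -> prevision T) (H : T -> Prop) (beta : R) :
  bounded (fHb Pi H beta).
Proof.
  exists (1 + Rabs beta); intros [y t]; unfold fHb; simpl.
  pose proof (ind_bounds H t) as HH.
  pose proof (ind_bounds (fun y => Pi y (ind H) > beta) y) as HPi.
  rewrite Rabs_mult, <- (Rmult_1_r (1 + Rabs beta)).
  apply Rmult_le_compat; try apply Rabs_pos.
  - eapply Rle_trans; [apply Rabs_triang |].
    rewrite Rabs_Ropp, Rabs_pos_eq by lra; lra.
  - apply Rabs_le; lra.
Qed.

Lemma fHb_sub_le_neg_ind {Y T : Type} (Pi : Y -> prevision T) (H : T -> Prop)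
  (beta : R) (p : Y * T) :
  beta <= 1 ->
  fHb Pi H beta p - (1 - beta)
    <= - ind (fun p : Y * T => Pi (fst p) (ind H) > beta /\ ~ H (snd p)) p.
Proof.
  intros Hbeta; destruct p as [y t]; unfold fHb, ind; simpl.
  destruct (excluded_middle_informative (H t));
  destruct (excluded_middle_informative (Pi y _ > beta));
  destruct (excluded_middle_informative (_ /\ _)); try tauto; lra.
Qed.

Theorem proposition3 (Y T : Type) (PYT : prevision (Y * T))
  (Pi : Y -> prevision T) :
  coherent PYT -> IM Y T Pi -> invulnerable PYT Pi -> valid PYT Pi.
Proof.
  intros HP _ Hinv H alpha Halpha; unfold upper.
  pose proof (Hinv H (1 - alpha) ltac:(lra)) as Hf.
  set (E := fun p : Y * T => Pi (fst p) (ind H) > 1 - alpha /\ ~ H (snd p)).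
  assert (Hshift : PYT (fHb Pi H (1 - alpha)) - alpha <= PYT (fun p => - ind E p)).
  { apply coherent_le_shift; [exact HP | apply bounded_fHb | apply bounded_opp_ind |].
    intro p; pose proof (fHb_sub_le_neg_ind Pi H (1 - alpha) p ltac:(lra)) as Hp.
    replace (1 - (1 - alpha)) with alpha in Hp by ring; exact Hp. }
  lra.
Qed.
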